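(* Let $\mathcal{I}$ be a Borel ideal on $\omega$ with $\mathrm{fin} \subseteq \mathcal{I}$. If $\mathcal{I}$ is uniformly weakly $P^+$, then $\mathcal{I}$ is uniformly weakly Ramsey.
   Context: $\mathrm{fin}$ is the ideal of finite subsets of $\omega$; $\mathcal{I}^+$ denotes subsets of $\omega$ not in $\mathcal{I}$; $A \subseteq_{\mathcal{I}} B$ means $A \setminus B \in \mathcal{I}$. $\mathcal{I}$ is uniformly weakly $P^+$ if there is a Borel function $\Phi$ such that for every $\subseteq$-decreasing sequence $\langle A_n : n\in\omega\rangle$ of $\mathcal{I}$-positive sets, $\Phi(\langle A_n\rangle) \in \mathcal{I}^+$ and $\Phi(\langle A_n\rangle) \subseteq_{\mathcal{I}} A_n$ for every $n$. For $A\subseteq\omega$, $\mathcal{I}|A = \{I \subseteq A : I\in\mathcal{I}\}$ and $(\mathcal{I}|A)^+$ is the family of subsets of $A$ not in $\mathcal{I}$. A coloring is $c : [\omega]^2 \to 2$; it is subadditive if $c(\{m,n\}) \le c(\{m,k\}) + c(\{n,k\})$ for all $m<n<k$. $H$ is 0-homogeneous for $c$ if $c(\{m,n\})=0$ for all distinct $m,n\in H$; $H$ is nowhere 0-homogeneous if every $B \in (\mathcal{I}|H)^+$ contains distinct $m,n$ with $c(\{m,n\})=1$. $\mathcal{I}$ is uniformly weakly Ramsey if there is a Borel $\Phi : [\omega]^\omega \times 2^{[\omega]^2} \to [\omega]^\omega$ such that for every $A \in \mathcal{I}^+$ and every subadditive coloring $c$, $\Phi(A,c) \in (\mathcal{I}|A)^+$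 and $\Phi(A,c)$ is 0-homogeneous or nowhere 0-homogeneous for $c$. *)

From mathcomp Require Import all_boot.
Set Implicit Arguments. Unset Strict Implicit. Unset Printing Implicit Defensive.

(* Borel sets of the product space 2^I (I a countable index type in all uses):
   the sigma-algebra generated by the subbasic clopen sets {x | x i = true}. *)
Inductive borel {I : Type} : ((I -> bool) -> Prop) -> Prop :=
  | borel_sub (i : I) : borel (fun x => x i = true)
  | borel_compl (A : (I -> bool) -> Prop) : borel A -> borel (fun x => ~ A x)
  | borel_cunion (F : nat -> (I -> bool) -> Prop) :
      (forall n, borel (F n)) -> borel (fun x => exists n, F n x)
  | borel_ext (A B : (I -> bool) -> Prop) :
      borel A -> (forall x, A x <-> B x) -> borel B.

Definition borel_fun {I J : Type} (f : (I -> bool) -> (J -> bool)) : Prop :=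
  forall j : J, borel (fun x => f x j = true).

Definition subset_nat := nat -> bool.
Definition subsetn (A B : subset_nat) : Prop := forall n, A n -> B n.
Definition setDn (A B : subset_nat) : subset_nat := fun n => A n && ~~ B n.
Definition setUn (A B : subset_nat) : subset_nat := fun n => A n || B n.
Definition fullset : subset_nat := fun _ => true.
Definition finite_set (A : subset_nat) : Prop := exists N, forall n, A n -> n < N.

Definition is_ideal (I : subset_nat -> Prop) : Prop :=
  (forall A B, I B -> subsetn A B -> I A) /\
  (forall A B, I A -> I B -> I (setUn A B)) /\
  ~ I fullset.

Definition borel_ideal (I : subset_nat -> Prop) : Prop :=
  is_ideal I /\ borel I.

Definition contains_fin (I : subset_nat -> Prop) : Prop :=
  forall A, finite_set A -> I A.

Definition positive (I : subset_nat -> Prop) (A : subset_nat) : Prop := ~ I A.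
Definition subsetI (I : subset_nat -> Prop) (A B : subset_nat) : Prop := I (setDn A B).

(* A sequence <A_n> of subsets of omega, coded as a point of 2^(omega x omega) *)
Definition code_seq (A : nat -> subset_nat) : (nat * nat) -> bool :=
  fun p => A p.1 p.2.

Definition uniformly_weakly_Pplus (I : subset_nat -> Prop) : Prop :=
  exists Phi : ((nat * nat) -> bool) -> subset_nat,
    borel_fun Phi /\
    forall A : nat -> subset_nat,
      (forall n, positive I (A n)) ->
      (forall n, subsetn (A n.+1) (A n)) ->
      positive I (Phi (code_seq A)) /\
      forall n, subsetI I (Phi (code_seq A)) (A n).

(* Colorings c : [omega]^2 -> 2 are coded by their values c (m,n) on pairs m < n;
   the colour of {m,n} (m <> n) is cval c m n. Values at pairs with m >= n are
   irrelevant. *)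
Definition coloring := (nat * nat) -> bool.
Definition cval (c : coloring) (m n : nat) : bool := c (minn m n, maxn m n).

Definition subadditive (c : coloring) : Prop :=
  forall m n k, m < n -> n < k -> cval c m n <= cval c m k + cval c n k.

Definition zero_homogeneous (c : coloring) (H : subset_nat) : Prop :=
  forall m n, H m -> H n -> m <> n -> cval c m n = false.

Definition nowhere_zero_homogeneous (I : subset_nat -> Prop) (c : coloring)
    (H : subset_nat) : Prop :=
  forall B, subsetn B H -> positive I B ->
    exists m n, B m /\ B n /\ m <> n /\ cval c m n = true.

(* A pair (A, c) coded as a point of 2^(omega + omega x omega) *)
Definition code_pair (A : subset_nat) (c : coloring) : (nat + nat * nat) -> bool :=
  fun s => match s with inl n => A n | inr p => c p end.

Definition uniformly_weakly_Ramsey (I : subset_nat -> Prop) : Prop :=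
  exists Phi : ((nat + nat * nat) -> bool) -> subset_nat,
    borel_fun Phi /\
    forall (A : subset_nat) (c : coloring),
      positive I A -> subadditive c ->
      (subsetn (Phi (code_pair A c)) A /\ positive I (Phi (code_pair A c))) /\
      (zero_homogeneous c (Phi (code_pair A c)) \/
       nowhere_zero_homogeneous I c (Phi (code_pair A c))).

(* Thin A out to A = D_0 ⊇ D_1 ⊇ ... by visiting the points in increasing order: at
   step k, if k is still present and the later points of D_k joined to k by colour 0 form
   an I-small set, discard k; otherwise keep k and discard every later point of colour 1
   with k.  Every D_n stays I-positive and the kept points form a 0-homogeneous set K, so
   if K is I-positive it is the witness.  Otherwise let P be the positive
   pseudo-intersection of the D_n given by the uniform weak P^+ property and take
   (P ∩ A) \ K.  By subadditivity every discarded point y has an I-small colour-0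
   neighbourhood above it inside some D_n, so a 0-homogeneous subset of the witness
   containing y is covered by [0, y], that neighbourhood and P \ D_n, and lies in I.
   Each step asks a Borel question about Borel data, so the construction is Borel. *)
From mathcomp Require Import all_boot boolp.

Set Implicit Arguments. Unset Strict Implicit. Unset Printing Implicit Defensive.

Section BorelSets.
Variable J : Type.

Definition borel_pred (f : (J -> bool) -> bool) : Prop := borel (fun x => f x = true).

Lemma borel_preimage (K : Type) (h : (J -> bool) -> (K -> bool)) (S : (K -> bool) -> Prop) :
  borel_fun h -> borel S -> borel (fun x => S (h x)).
Proof.
move=> borel_h; elim=> [k | S' _ IH | F _ IH | S' S'' _ IH eqS].
- exact: borel_h.
- exact: borel_compl.
- exact: (borel_cunion (F := fun n x => F n (h x))).
- by apply: borel_ext IH _ => x; apply: eqS.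
Qed.

Lemma borel_fun_comp (K L : Type) (g : (J -> bool) -> (K -> bool))
    (f : (K -> bool) -> (L -> bool)) :
  borel_fun g -> borel_fun f -> borel_fun (fun x => f (g x)).
Proof. by move=> borel_g borel_f l; apply: borel_preimage (borel_f l). Qed.

Lemma borel_predN f : borel_pred f -> borel_pred (fun x => ~~ f x).
Proof.
move=> borel_f; apply: borel_ext (borel_compl borel_f) _ => x.
by case: (f x); split=> // /(_ erefl).
Qed.

Lemma borel_predU f g : borel_pred f -> borel_pred g -> borel_pred (fun x => f x || g x).
Proof.
move=> borel_f borel_g.
apply: (borel_ext (borel_cunion
  (F := fun n x => (if n is 0 then f x else g x) = true) _)) => [[] // | x].
split=> [[[|n] ->] | /orP [fx | gx]]; rewrite ?orbT //; by [exists 0 | exists 1].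
Qed.

Lemma borel_predI f g : borel_pred f -> borel_pred g -> borel_pred (fun x => f x && g x).
Proof.
move=> borel_f borel_g.
apply: borel_ext (borel_predN (borel_predU (borel_predN borel_f) (borel_predN borel_g))) _.
by move=> x; rewrite negb_or !negbK.
Qed.

Lemma borel_pred_if b f g : borel_pred b -> borel_pred f -> borel_pred g ->
  borel_pred (fun x => if b x then f x else g x).
Proof.
move=> borel_b borel_f borel_g.
apply: borel_ext (borel_predU (borel_predI borel_b borel_f)
                              (borel_predI (borel_predN borel_b) borel_g)) _.
by move=> x; case: (b x); rewrite ?orbF.
Qed.

Lemma borel_pred_const (j : J) (b : bool) : borel_pred (fun _ => b).
Proof.
have borel_true : borel_pred (fun x => x j || ~~ x j).
  by apply: borel_predU; [|apply: borel_predN]; apply: borel_sub.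
case: b; first by apply: borel_ext borel_true _ => x; rewrite orbN.
by apply: borel_ext (borel_predN borel_true) _ => x; rewrite orbN.
Qed.

Lemma borel_pred_asbool (S : (J -> bool) -> Prop) : borel S -> borel_pred (fun x => `[< S x >]).
Proof. by move=> borel_S; apply: borel_ext borel_S _ => x; split=> /asboolP. Qed.

End BorelSets.

Definition setIn (A B : subset_nat) : subset_nat := fun n => A n && B n.

Section Ideal.
Variable I : subset_nat -> Prop.
Hypothesis idealI : is_ideal I.

Lemma ideal_sub A B : I B -> subsetn A B -> I A.
Proof. by case: idealI => sub _; apply: sub. Qed.

Lemma ideal_setU A B : I A -> I B -> I (setUn A B).
Proof. by case: idealI => _ [setU _]; apply: setU. Qed.

End Ideal.

Lemma nowhere_zero_homogeneousP (I : subset_nat -> Prop) (c : coloring) (H : subset_nat) :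
  (forall B, subsetn B H -> zero_homogeneous c B -> I B) ->
  nowhere_zero_homogeneous I c H.
Proof.
move=> small_homogeneous B BH Bpos; apply: contrapT => no_pair.
apply/Bpos/small_homogeneous => // m n Bm Bn mn.
by apply/negbTE/negP => cmn; apply: no_pair; exists m, n.
Qed.

Lemma cvalC (c : coloring) m n : cval c m n = cval c n m.
Proof. by rewrite /cval minnC maxnC. Qed.

Lemma bool_seq_drop (f : nat -> bool) n :
  f 0 -> ~~ f n -> exists2 k, k < n & f k && ~~ f k.+1.
Proof.
move=> f0; elim: n => [|n IH]; first by rewrite f0.
case fn: (f n) => fn1; first by exists n; rewrite ?fn.
by have [|k lt_k_n drop_k] := IH; [rewrite fn | exists k; first exact: ltnW].
Qed.

Section Pruning.
Variables (I : subset_nat -> Prop) (c : coloring).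
Implicit Types E : subset_nat.

Definition zero_after (k : nat) : subset_nat := fun z => (k < z) && ~~ cval c k z.

Definition prune (k : nat) E : subset_nat :=
  fun m => if E k then
             if `[< I (setIn E (zero_after k)) >] then E m && (m != k)
             else E m && ((m <= k) || zero_after k m)
           else E m.

Lemma prune_idle k E : E k = false -> prune k E =1 E.
Proof. by move=> Ek m; rewrite /prune Ek. Qed.

Lemma prune_small k E : E k -> I (setIn E (zero_after k)) ->
  prune k E =1 fun m => E m && (m != k).
Proof. by move=> Ek small m; rewrite /prune Ek asboolT. Qed.

Lemma prune_large k E : E k -> ~ I (setIn E (zero_after k)) ->
  prune k E =1 setIn E (fun m => (m <= k) || zero_after k m).
Proof. by move=> Ek large m; rewrite /prune Ek asboolF. Qed.

Lemma prune_sub k E : subsetn (prune k E) E.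
Proof.
move=> m; case Ek: (E k); last by rewrite prune_idle.
have [small | large] := pselect (I (setIn E (zero_after k))).
  by rewrite prune_small // => /andP [].
by rewrite prune_large // => /andP [].
Qed.

Lemma prune_below k E m : m < k -> prune k E m = E m.
Proof.
by move=> lt_m_k; rewrite /prune (ltn_eqF lt_m_k) (ltnW lt_m_k) /= !andbT !if_same.
Qed.

Lemma prune_kept k E z : prune k E k -> prune k E z -> k < z -> cval c k z = false.
Proof.
case Ek: (E k); last by rewrite prune_idle // Ek.
have [small | large] := pselect (I (setIn E (zero_after k))).
  by rewrite prune_small // eqxx andbF.
rewrite !prune_large // => _ /andP [_ Uz] lt_k_z.
by move: Uz; rewrite /zero_after leqNgt lt_k_z /= => /negbTE.
Qed.

Hypotheses (idealI : is_ideal I) (finI : contains_fin I).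

Lemma prune_positive k E : positive I E -> positive I (prune k E).
Proof.
move=> Epos; case Ek: (E k); first last.
  by move=> Iprune; apply/Epos/(ideal_sub idealI Iprune) => m; rewrite prune_idle.
have [small | large] := pselect (I (setIn E (zero_after k))); move=> Iprune.
  have Ik : I (fun m => m == k) by apply: finI; exists k.+1 => m /eqP ->.
  apply/Epos/(ideal_sub idealI (ideal_setU idealI Iprune Ik)) => m Em.
  by rewrite /setUn prune_small // Em; case: eqP.
apply/large/(ideal_sub idealI Iprune) => m /andP [Em Um].
by rewrite prune_large // /setIn Em Um orbT.
Qed.

Hypothesis subadditive_c : subadditive c.

(* If k survives step k, a later point y dropped there has colour 1 with k, so by
   subadditivity every surviving point above y has colour 1 with y; otherwise y = k. *)
Lemma prune_drop k E y : k <= y -> E y -> ~~ prune k E y ->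
  I (setIn (prune k E) (zero_after y)).
Proof.
move=> le_k_y Ey; case Ek: (E k); last by rewrite prune_idle ?Ey.
have [small | large] := pselect (I (setIn E (zero_after k))).
  rewrite prune_small // Ey /= => /negbNE/eqP ->.
  by apply: (ideal_sub idealI small) => z /andP [/prune_sub Ez Uz]; apply/andP.
rewrite prune_large // /setIn Ey /= negb_or -ltnNge => /andP [lt_k_y].
rewrite /zero_after lt_k_y /= negbK => cky.
apply: finI; exists 0 => z /andP []; rewrite prune_large // => /andP [_].
rewrite /zero_after => /orP [le_z_k | /andP [_ ckz]] /andP [lt_y_z cyz].
  by have := leq_trans lt_y_z (leq_trans le_z_k (ltnW lt_k_y)); rewrite ltnn.
have := subadditive_c lt_k_y lt_y_z.
by rewrite cky (negbTE ckz) (negbTE cyz).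
Qed.

End Pruning.

Section PruneSequence.
Variables (I : subset_nat -> Prop) (c : coloring) (A : subset_nat).

Fixpoint prune_seq (n : nat) : subset_nat :=
  if n is k.+1 then prune I c k (prune_seq k) else A.

Definition kept : subset_nat := fun m => prune_seq m.+1 m.

Definition kept_remainder (P : subset_nat) : subset_nat :=
  fun m => P m && A m && ~~ kept m.

Lemma prune_seq_decr n : subsetn (prune_seq n.+1) (prune_seq n).
Proof. exact: prune_sub. Qed.

Lemma prune_seq_mono m n : m <= n -> subsetn (prune_seq n) (prune_seq m).
Proof.
move=> /subnKC <-; elim: (n - m) => [|d IH] z; first by rewrite addn0.
by rewrite addnS => /prune_seq_decr; apply: IH.
Qed.

Lemma kept_prune_seq m n : kept m -> prune_seq n m.
Proof.
move=> Km; case: (leqP n m.+1) => [le_n_m1 | ]; first exact: prune_seq_mono le_n_m1 _ Km.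
elim: n => // n IH; rewrite ltnS => le_m1_n /=; rewrite prune_below //.
by move: le_m1_n; rewrite leq_eqVlt => /orP [/eqP <- | /IH].
Qed.

Lemma kept_sub : subsetn kept A.
Proof. by move=> m; apply: prune_seq_mono (leq0n m.+1) m. Qed.

Lemma kept_zero_homogeneous : zero_homogeneous c kept.
Proof.
have ordered m n : m < n -> kept m -> kept n -> cval c m n = false.
  by move=> lt_m_n Km /kept_prune_seq Kn; apply: prune_kept Km (Kn m.+1) lt_m_n.
move=> m n Km Kn; case: (ltngtP m n) => [lt_m_n | lt_n_m | ->] // _.
  exact: ordered.
by rewrite cvalC; apply: ordered.
Qed.

Hypotheses (idealI : is_ideal I) (finI : contains_fin I) (subadditive_c : subadditive c).

Lemma prune_seq_positive : positive I A -> forall n, positive I (prune_seq n).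
Proof. by move=> Apos; elim=> //= n IH; apply: prune_positive. Qed.

Lemma not_kept_small y : A y -> ~~ kept y ->
  exists n, I (setIn (prune_seq n) (zero_after c y)).
Proof.
move=> Ay not_Ky.
have [k lt_k_y1 /andP [Dk_y not_Dk1_y]] := bool_seq_drop (f := prune_seq^~ y) Ay not_Ky.
by exists k.+1; apply: prune_drop.
Qed.

Lemma kept_remainder_positive P :
  positive I P -> subsetI I P A -> I kept -> positive I (kept_remainder P).
Proof.
move=> Ppos PsubA Ikept Irem; apply/Ppos/(ideal_sub idealI
  (ideal_setU idealI PsubA (ideal_setU idealI Ikept Irem))) => m Pm.
by rewrite /setUn /setDn /kept_remainder Pm; case: (A m); case: (kept m).
Qed.

Lemma kept_remainder_homogeneous_small P :
  (forall n, subsetI I P (prune_seq n)) ->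
  forall B, subsetn B (kept_remainder P) -> zero_homogeneous c B -> I B.
Proof.
move=> PsubD B Bsub Bhom.
have [[y By] | noB] := pselect (exists y, B y); last first.
  by apply: finI; exists 0 => z Bz; case: noB; exists z.
have /andP [/andP [_ Ay] not_Ky] := Bsub y By.
have [n Ismall] := not_kept_small Ay not_Ky.
have Iinit : I (fun z => z < y.+1) by apply: finI; exists y.+1.
apply: (ideal_sub idealI (ideal_setU idealI Iinit
          (ideal_setU idealI Ismall (PsubD n)))) => z Bz.
rewrite /setUn /setIn /setDn /zero_after ltnS; case: (leqP z y) => //= lt_y_z.
have /andP [/andP [Pz _] _] := Bsub z Bz.
rewrite Bhom ?Pz //=; first by case: (prune_seq n z).
by move=> eq_yz; rewrite eq_yz ltnn in lt_y_z.
Qed.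

End PruneSequence.

Definition ramsey_witness (I : subset_nat -> Prop) (Phi : (nat * nat -> bool) -> subset_nat)
    (A : subset_nat) (c : coloring) : subset_nat :=
  if `[< I (kept I c A) >] then kept_remainder I c A (Phi (code_seq (prune_seq I c A)))
  else kept I c A.

Section BorelConstruction.
Variables (J : Type) (j : J) (I : subset_nat -> Prop).
Variables (A : (J -> bool) -> subset_nat) (c : (J -> bool) -> coloring).
Hypotheses (borelI : borel I) (borelA : borel_fun A) (borelc : borel_fun c).

Lemma borel_zero_after k : borel_fun (fun x => zero_after (c x) k).
Proof. by move=> z; apply: borel_predI (borel_pred_const j _) (borel_predN (borelc _)). Qed.

Lemma borel_prune k E : borel_fun E -> borel_fun (fun x => prune I (c x) k (E x)).
Proof.
move=> borelE m; apply: borel_pred_if (borelE k) _ (borelE m).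
apply: borel_pred_if.
- apply/borel_pred_asbool/(borel_preimage (h := fun x => setIn (E x) (zero_after (c x) k))).
    by move=> z; apply: borel_predI (borelE z) (borel_zero_after k z).
  exact: borelI.
- exact: borel_predI (borelE m) (borel_pred_const j _).
- exact: borel_predI (borelE m) (borel_predU (borel_pred_const j _) (borel_zero_after k m)).
Qed.

Lemma borel_prune_seq n : borel_fun (fun x => prune_seq I (c x) (A x) n).
Proof. by elim: n => //= n IH; apply: borel_prune. Qed.

Lemma borel_kept : borel_fun (fun x => kept I (c x) (A x)).
Proof. by move=> m; apply: borel_prune_seq. Qed.

Lemma borel_ramsey_witness Phi :
  borel_fun Phi -> borel_fun (fun x => ramsey_witness I Phi (A x) (c x)).
Proof.
move=> borelPhi m.
have borel_remainder : borel_pred (fun x =>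
    kept_remainder I (c x) (A x) (Phi (code_seq (prune_seq I (c x) (A x)))) m).
  apply: borel_predI (borel_predN (borel_kept m)).
  apply: borel_predI (borelA m).
  by apply: (borel_fun_comp _ borelPhi) => p; apply: borel_prune_seq.
pose small_kept x := `[< I (kept I (c x) (A x)) >].
apply: borel_ext (borel_pred_if (b := small_kept) _ borel_remainder (borel_kept m)) _ => [|x].
  exact/borel_pred_asbool/(borel_preimage borel_kept).
by rewrite /ramsey_witness /small_kept; case: ifP.
Qed.

End BorelConstruction.

Theorem lemma5p2 (I : subset_nat -> Prop) :
  borel_ideal I -> contains_fin I ->
  uniformly_weakly_Pplus I -> uniformly_weakly_Ramsey I.
Proof.
move=> [idealI borelI] finI [Phi [borelPhi PplusPhi]].
exists (fun x => ramsey_witness I Phi (fun n => x (inl n)) (fun p => x (inr p))).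
split.
  apply: (borel_ramsey_witness (inl 0) (A := fun x n => x (inl n)) (c := fun x p => x (inr p)))
    => // [n | p]; exact: borel_sub.
move=> A c Apos subadditive_c; rewrite /= /ramsey_witness.
have [Ppos PsubD] :=
  PplusPhi _ (prune_seq_positive (c := c) idealI finI Apos) (@prune_seq_decr I c A).
case: asboolP => [Ikept | Kpos].
  split; [split | right].
  - by move=> m /andP [/andP []].
  - exact: kept_remainder_positive (PsubD 0) Ikept.
  - exact/nowhere_zero_homogeneousP/(kept_remainder_homogeneous_small idealI finI subadditive_c).
split; [split | left]; [exact: kept_sub | exact: Kpos | exact: kept_zero_homogeneous].
Qed.
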